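(* Let $\mathbf G_*=(\partial:G_1\to G_0)$ be a crossed module. Then $\mathbf Z_0(\mathbf G_* )$ is a subgroup of $\mathrm{Der}_{G_0}(G_0,G_1)$, and there is a commutative diagram with exact rows $$0\to\mathsf H^0(G_0,\mathbf G_* )\to G_1\xrightarrow{\delta}\mathrm{Der}_{G_0}(G_0,G_1)\to\mathsf H^1(G_0,\mathbf G_* )\to 1,$$ $$0\to\pi_1(\mathbf Z_*(\mathbf G_* ))\to G_1\xrightarrow{\delta}\mathbf Z_0(\mathbf G_* )\to\pi_0(\mathbf Z_*(\mathbf G_* ))\to 1,$$ in which the vertical maps are an isomorphism $\pi_1(\mathbf Z_*(\mathbf G_* ))\cong\mathsf H^0(G_0,\mathbf G_* )$, the identity of $G_1$, the inclusion $\mathbf Z_0(\mathbf G_* )\subseteq\mathrm{Der}_{G_0}(G_0,G_1)$ and an injective map $\pi_0(\mathbf Z_*(\mathbf G_* ))\to\mathsf H^1(G_0,\mathbf G_* )$.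
   Context: A crossed module $\mathbf G_*$: groups $G_1,G_0$, a homomorphism $\partial:G_1\to G_0$ and a left action $(x,a)\mapsto{}^xa$ of $G_0$ on $G_1$ by automorphisms, with $\partial({}^x a)=x\partial(a)x^{-1}$ and ${}^{\partial(b)}a=bab^{-1}$. Commutators $[x,t]=xtx^{-1}t^{-1}$. $\mathsf H^0(G_0,\mathbf G_* )=\{a\in G_1:\partial a=1,\ {}^xa=a\ \forall x\in G_0\}$. $\mathrm{Der}_{G_0}(G_0,G_1)$ is the set of pairs $(g,\gamma)$, $g\in G_0$, $\gamma:G_0\to G_1$ with $\gamma(st)=\gamma(s)\,{}^s\gamma(t)$ and $\partial\gamma(t)=[g,t]$; it is a group under $(g,\gamma)(g',\gamma')=(gg',\ t\mapsto{}^g\gamma'(t)\,\gamma(t))$. $\mathsf H^1(G_0,\mathbf G_* )$ is $\mathrm{Der}_{G_0}(G_0,G_1)$ modulo the relation $(g,\gamma)\sim(g',\gamma')$ iff there is $a\in G_1$ with $g'=\partial(a)^{-1}g$ and $\gamma'(t)=a^{-1}\gamma(t)\,{}^ta$ for all $t$. $\mathbf Z_0(\mathbf G_* )$ is the set of $(x,\xi)\in\mathrm{Der}_{G_0}(G_0,G_1)$ additionally satisfying $\xi(\partial a)={}^xa\,a^{-1}$ for all $a\in G_1$. $\delta(c)=(\partial c,\ t\mapsto c\,({}^tc)^{-1})$; $\pi_1(\mathbf Z_*(\mathbf G_* ))=\ker\delta$, $\pi_0(\mathbf Z_*(\mathbf G_* ))=\mathbf Z_0(\mathbf G_* )/\mathrm{Im}\delta$.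 *)

Record Group := {
  gcar :> Type;
  gmul : gcar -> gcar -> gcar;
  gone : gcar;
  ginv : gcar -> gcar;
  gmulA : forall x y z, gmul x (gmul y z) = gmul (gmul x y) z;
  gmul1l : forall x, gmul gone x = x;
  gmul1r : forall x, gmul x gone = x;
  gmulVl : forall x, gmul (ginv x) x = gone;
  gmulVr : forall x, gmul x (ginv x) = gone
}.

Arguments gmul {_} _ _.
Arguments gone {_}.
Arguments ginv {_} _.

Record CrossedModule := {
  G0 : Group;
  G1 : Group;
  bd : G1 -> G0;
  act : G0 -> G1 -> G1;
  bd_mul : forall a b, bd (gmul a b) = gmul (bd a) (bd b);
  act_mul : forall x a b, act x (gmul a b) = gmul (act x a) (act x b);
  act_one : forall a, act gone a = a;
  act_comp : forall x y a, act (gmul x y) a = act x (act y a);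
  bd_act : forall x a, bd (act x a) = gmul (gmul x (bd a)) (ginv x);
  peiffer : forall a b, act (bd b) a = gmul (gmul b a) (ginv b)
}.

Arguments bd {_} _.
Arguments act {_} _ _.

Section CM.
Variable C : CrossedModule.

Definition comm (x t : G0 C) : G0 C :=
  gmul (gmul (gmul x t) (ginv x)) (ginv t).

Definition DT : Type := (G0 C * (G0 C -> G1 C))%type.

Definition is_der (d : DT) : Prop :=
  (forall s t, snd d (gmul s t) = gmul (snd d s) (act s (snd d t))) /\
  (forall t, bd (snd d t) = comm (fst d) t).

Definition dmul (d d' : DT) : DT :=
  (gmul (fst d) (fst d'), fun t => gmul (act (fst d) (snd d' t)) (snd d t)).

Definition done : DT := (gone, fun _ => gone).

Definition dinv (d : DT) : DT :=
  (ginv (fst d), fun t => act (ginv (fst d)) (ginv (snd d t))).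

Definition in_Z0 (d : DT) : Prop :=
  is_der d /\ forall a, snd d (bd a) = gmul (act (fst d) a) (ginv a).

Definition in_H0 (a : G1 C) : Prop :=
  bd a = gone /\ forall x, act x a = a.

Definition H0set : Type := {a : G1 C | in_H0 a}.

Definition delta (c : G1 C) : DT :=
  (bd c, fun t => gmul c (ginv (act t c))).

Definition H1rel (d d' : DT) : Prop :=
  exists a : G1 C, fst d' = gmul (ginv (bd a)) (fst d) /\
    forall t, snd d' t = gmul (gmul (ginv a) (snd d t)) (act t a).

Definition H1class (d : DT) : DT -> Prop := fun d' => is_der d' /\ H1rel d d'.

(** H^1(G0, G_* ) = Der / ~, as the set of equivalence classes. *)
Definition H1 : Type := {P : DT -> Prop | exists d, is_der d /\ P = H1class d}.

Definition pi1 : Type := {c : G1 C | delta c = done}.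

Definition pi0class (z : DT) : DT -> Prop :=
  fun d => in_Z0 d /\ exists c, d = dmul (delta c) z.

(** π_0(Z_*(G_* )) = Z_0 / Im δ, as the set of cosets. *)
Definition pi0 : Type := {P : DT -> Prop | exists z, in_Z0 z /\ P = pi0class z}.

End CM.

Arguments done {_}.

From Stdlib Require Import FunctionalExtensionality PropExtensionality ProofIrrelevance.

Section GroupFacts.
Variable G : Group.

Lemma mulA_r (x y z : G) : gmul (gmul x y) z = gmul x (gmul y z).
Proof. symmetry; apply gmulA. Qed.

Lemma mulKl (x y : G) : gmul (ginv x) (gmul x y) = y.
Proof. rewrite gmulA, gmulVl, gmul1l; reflexivity. Qed.

Lemma mulKr (x y : G) : gmul x (gmul (ginv x) y) = y.
Proof. rewrite gmulA, gmulVr, gmul1l; reflexivity. Qed.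

Lemma inv_unique (x y : G) : gmul x y = gone -> ginv x = y.
Proof. intro h. rewrite <- (mulKl x y), h, gmul1r; reflexivity. Qed.

Lemma inv_mul (x y : G) : ginv (gmul x y) = gmul (ginv y) (ginv x).
Proof. apply inv_unique. rewrite mulA_r, mulKr, gmulVr; reflexivity. Qed.

Lemma inv_inv (x : G) : ginv (ginv x) = x.
Proof. apply inv_unique, gmulVl. Qed.

Lemma inv_one : ginv (@gone G) = gone.
Proof. apply inv_unique, gmul1l. Qed.
End GroupFacts.

Arguments mulA_r {G}. Arguments mulKl {G}. Arguments mulKr {G}.
Arguments inv_unique {G}. Arguments inv_mul {G}. Arguments inv_inv {G}.
Arguments inv_one {G}.

Section Homomorphisms.
Variables G H : Group.
Variable f : G -> H.
Hypothesis f_mul : forall x y, f (gmul x y) = gmul (f x) (f y).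

Lemma hom_one : f gone = gone.
Proof.
  assert (idem : f gone = gmul (f gone) (f gone)) by (rewrite <- f_mul, gmul1l; reflexivity).
  rewrite <- (mulKl (f gone) (f gone)) at 1. rewrite <- idem, gmulVl. reflexivity.
Qed.

Lemma hom_inv x : f (ginv x) = ginv (f x).
Proof. symmetry; apply inv_unique. rewrite <- f_mul, gmulVr. apply hom_one. Qed.
End Homomorphisms.

Section CrossedModuleFacts.
Variable C : CrossedModule.

Lemma bd_one : bd (@gone (G1 C)) = gone.
Proof. apply hom_one, bd_mul. Qed.

Lemma bd_inv a : bd (@ginv (G1 C) a) = ginv (bd a).
Proof. apply hom_inv, bd_mul. Qed.

Lemma act_one_r (x : G0 C) : act x gone = gone.
Proof. apply hom_one, act_mul. Qed.

Lemma act_inv (x : G0 C) a : act x (ginv a) = ginv (act x a).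
Proof. apply hom_inv, act_mul. Qed.

Lemma act_comp_r (x y : G0 C) a : act x (act y a) = act (gmul x y) a.
Proof. symmetry; apply act_comp. Qed.
End CrossedModuleFacts.

Hint Rewrite @mulA_r @mulKl @mulKr gmulVl gmulVr gmul1l gmul1r @inv_mul @inv_inv
  @inv_one bd_one bd_inv bd_act bd_mul act_mul act_one act_one_r act_inv act_comp_r
  : group_simpl.
Ltac group_simpl := autorewrite with group_simpl; try reflexivity.

Section RestrictedClasses.
Variable T : Type.
Variable E : T -> T -> Prop.
Hypothesis E_refl : forall x, E x x.
Hypothesis E_sym : forall x y, E x y -> E y x.
Hypothesis E_trans : forall x y z, E x y -> E y z -> E x z.

Lemma restricted_class_eq (S : T -> Prop) z z' : S z' ->
  ((fun d => S d /\ E z d) = (fun d => S d /\ E z' d) <-> E z z').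
Proof.
  intro Sz'. split.
  - intro e. assert (mem : (fun d => S d /\ E z' d) z') by (split; auto).
    rewrite <- e in mem. apply mem.
  - intro r. extensionality d. apply propositional_extensionality.
    split; intros [Sd Ed]; split; eauto.
Qed.
End RestrictedClasses.

Lemma sig_val_inj (A : Type) (P : A -> Prop) (u v : {x | P x}) :
  proj1_sig u = proj1_sig v -> u = v.
Proof.
  destruct u as [x p], v as [y q]; simpl; intros <-. f_equal. apply proof_irrelevance.
Qed.

Section Derivations.
Variable C : CrossedModule.
Implicit Types (a b c : G1 C) (g s t : G0 C) (d z : DT C).

Lemma peiffer_swap b a : gmul b a = gmul (act (bd b) a) b.
Proof. rewrite peiffer. group_simpl. Qed.

Lemma act_twist g s X (u : G1 C) : bd u = comm C g s ->
  gmul (act (gmul g s) X) u = gmul u (act (gmul s g) X).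
Proof. intro hu. rewrite (peiffer_swap u), hu. unfold comm. group_simpl. Qed.

Lemma DT_ext d d' : fst d = fst d' -> (forall t, snd d t = snd d' t) -> d = d'.
Proof. destruct d, d'; simpl; intros -> h. f_equal. extensionality t; auto. Qed.

Lemma dmulA d1 d2 d3 : dmul C (dmul C d1 d2) d3 = dmul C d1 (dmul C d2 d3).
Proof. apply DT_ext; simpl; intros; group_simpl. Qed.

Lemma dmul1l d : dmul C done d = d.
Proof. apply DT_ext; simpl; intros; group_simpl. Qed.

Lemma dmul1r d : dmul C d done = d.
Proof. apply DT_ext; simpl; intros; group_simpl. Qed.

Lemma dmulV d : dmul C d (dinv C d) = done /\ dmul C (dinv C d) d = done.
Proof. split; apply DT_ext; simpl; intros; group_simpl. Qed.

(* Der is closed under the group law; the cocycle identity of the product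
   uses [act_twist] to move  ^{gs}gamma'(t)  past  gamma(s). *)
Lemma dmul_der d d' : is_der C d -> is_der C d' -> is_der C (dmul C d d').
Proof.
  destruct d as [g ga], d' as [g' ga']. unfold is_der, dmul, comm; simpl.
  intros [cocyc bdg] [cocyc' bdg']. split; intros.
  - rewrite cocyc, cocyc'. group_simpl. f_equal.
    rewrite (gmulA _ (act (gmul g s) (ga' t))), act_twist by apply bdg. group_simpl.
  - group_simpl. rewrite bdg, bdg'. unfold comm. group_simpl.
Qed.

Lemma dinv_der d : is_der C d -> is_der C (dinv C d).
Proof.
  destruct d as [g ga]. unfold is_der, dinv, comm; simpl.
  intros [cocyc bdg]. split; intros.
  - assert (twisted : gmul (act (ginv g) (ga s)) (act (gmul (ginv g) s) (ga t)) =
                      gmul (act (gmul s (ginv g)) (ga t)) (act (ginv g) (ga s))).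
    { transitivity (act (ginv g) (gmul (ga s) (act s (ga t)))); [group_simpl|].
      transitivity (act (ginv g) (gmul (act (gmul g s) (act (ginv g) (ga t))) (ga s)));
        [|group_simpl].
      f_equal. rewrite act_twist by apply bdg. group_simpl. }
    rewrite cocyc. group_simpl. rewrite <- !inv_mul, twisted. reflexivity.
  - group_simpl. rewrite bdg. unfold comm. group_simpl.
Qed.

Lemma done_Z0 : in_Z0 C done.
Proof. unfold in_Z0, is_der, done, comm; simpl. repeat split; intros; group_simpl. Qed.

Lemma dmul_Z0 d d' : in_Z0 C d -> in_Z0 C d' -> in_Z0 C (dmul C d d').
Proof.
  intros [Dd zd] [Dd' zd']. split; [apply dmul_der; assumption|].
  intro a; simpl. rewrite zd, zd'. group_simpl.
Qed.

Lemma dinv_Z0 d : in_Z0 C d -> in_Z0 C (dinv C d).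
Proof.
  intros [Dd zd]. split; [apply dinv_der; assumption|].
  intro a; simpl. rewrite zd. group_simpl.
Qed.

Lemma delta_mul c c' : delta C (gmul c c') = dmul C (delta C c) (delta C c').
Proof. apply DT_ext; simpl; intros; [group_simpl|]. rewrite peiffer. group_simpl. Qed.

Lemma delta_one : delta C gone = done.
Proof. apply DT_ext; simpl; intros; group_simpl. Qed.

Lemma delta_Z0 c : in_Z0 C (delta C c).
Proof.
  unfold in_Z0, is_der, delta, comm; simpl.
  repeat split; intros; rewrite ?peiffer; group_simpl.
Qed.

Lemma ker_delta a : in_H0 C a <-> delta C a = done.
Proof.
  unfold in_H0, delta, done. split.
  - intros [bda fixa]. apply DT_ext; simpl; intros; [exact bda|]. rewrite fixa; group_simpl.
  - intro h. split; [exact (f_equal fst h)|].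
    intro x. pose proof (equal_f (f_equal snd h) x) as e. simpl in e.
    apply inv_unique in e. rewrite <- (inv_inv (act x a)), <- e, inv_inv. reflexivity.
Qed.

Definition coset_rel d d' : Prop := exists c, d' = dmul C (delta C c) d.

Lemma coset_rel_refl d : coset_rel d d.
Proof. exists gone. rewrite delta_one, dmul1l. reflexivity. Qed.

Lemma coset_rel_sym d1 d2 : coset_rel d1 d2 -> coset_rel d2 d1.
Proof.
  intros [c ->]. exists (ginv c).
  rewrite <- dmulA, <- delta_mul, gmulVl, delta_one, dmul1l. reflexivity.
Qed.

Lemma coset_rel_trans d1 d2 d3 : coset_rel d1 d2 -> coset_rel d2 d3 -> coset_rel d1 d3.
Proof. intros [c ->] [c' ->]. exists (gmul c' c). rewrite delta_mul, dmulA. reflexivity. Qed.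

Lemma coset_rel_done d : coset_rel d done <-> exists c, d = delta C c.
Proof.
  split.
  - intro r. destruct (coset_rel_sym _ _ r) as [c ->]. exists c. apply dmul1r.
  - intros [c ->]. apply coset_rel_sym. exists c. symmetry; apply dmul1r.
Qed.

(* The relation defining H^1 is the coset relation, with  a = c^-1. *)
Lemma H1rel_coset d d' : H1rel C d d' <-> coset_rel d d'.
Proof.
  unfold H1rel, coset_rel, dmul, delta. split.
  - intros [a [hfst hsnd]]. exists (ginv a). destruct d', d; simpl in *.
    apply DT_ext; simpl; [rewrite hfst; group_simpl|].
    intro t. rewrite hsnd, peiffer; group_simpl.
  - intros [c ->]. exists (ginv c); simpl. split; [group_simpl|].
    intro t. rewrite peiffer; group_simpl.
Qed.

Lemma H1class_coset d : H1class C d = (fun d' => is_der C d' /\ coset_rel d d').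
Proof.
  extensionality d'. apply propositional_extensionality.
  unfold H1class. rewrite H1rel_coset. tauto.
Qed.

Lemma H1class_eq z z' : is_der C z' -> (H1class C z = H1class C z' <-> coset_rel z z').
Proof.
  intro Dz'. rewrite !H1class_coset.
  exact (restricted_class_eq _ _ coset_rel_refl coset_rel_sym coset_rel_trans _ _ _ Dz').
Qed.

Lemma pi0class_eq z z' : in_Z0 C z' -> (pi0class C z = pi0class C z' <-> coset_rel z z').
Proof.
  exact (restricted_class_eq _ _ coset_rel_refl coset_rel_sym coset_rel_trans (in_Z0 C) z z').
Qed.

Lemma H1class_trivial d : H1class C d = H1class C done <-> exists c, d = delta C c.
Proof. rewrite H1class_eq by apply done_Z0. apply coset_rel_done. Qed.

Lemma pi0class_trivial z : pi0class C z = pi0class C done <-> exists c, z = delta C c.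
Proof. rewrite pi0class_eq by apply done_Z0. apply coset_rel_done. Qed.

(* pi_1 = ker delta and H^0 are the same subset of G1. *)
Definition pi1_to_H0 (x : pi1 C) : H0set C :=
  exist _ (proj1_sig x) (proj2 (ker_delta _) (proj2_sig x)).

Definition H0_to_pi1 (y : H0set C) : pi1 C :=
  exist _ (proj1_sig y) (proj1 (ker_delta _) (proj2_sig y)).

Lemma pi1_H0_inverse :
  (forall k : pi1 C, H0_to_pi1 (pi1_to_H0 k) = k) /\
  (forall h : H0set C, pi1_to_H0 (H0_to_pi1 h) = h).
Proof. split; intro; apply sig_val_inj; reflexivity. Qed.

(* pi_0 -> H^1 sends a Z_0-coset to its saturation in Der. *)
Definition saturate (P : DT C -> Prop) : DT C -> Prop :=
  fun d' => is_der C d' /\ exists z, P z /\ H1rel C z d'.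

Lemma saturate_pi0class z : in_Z0 C z -> saturate (pi0class C z) = H1class C z.
Proof.
  intro Zz. extensionality d'. apply propositional_extensionality.
  unfold saturate, H1class. setoid_rewrite H1rel_coset. split.
  - intros [Dd' [y [[_ zy] yd']]]. split; [exact Dd'|]. eapply coset_rel_trans; eassumption.
  - intros [Dd' zd']. split; [exact Dd'|]. exists z. split; [|exact zd'].
    split; [exact Zz | apply coset_rel_refl].
Qed.

Definition pi0_to_H1 (P : pi0 C) : H1 C.
Proof.
  exists (saturate (proj1_sig P)).
  destruct (proj2_sig P) as [z [Zz ->]]. exists z.
  split; [apply Zz | apply saturate_pi0class, Zz].
Defined.

Lemma pi0_to_H1_class (P : pi0 C) z : in_Z0 C z -> proj1_sig P = pi0class C z ->
  proj1_sig (pi0_to_H1 P) = H1class C z.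
Proof. intros Zz eP. simpl. rewrite eP. apply saturate_pi0class, Zz. Qed.

Lemma pi0_to_H1_inj P Q : pi0_to_H1 P = pi0_to_H1 Q -> P = Q.
Proof.
  intro e. apply sig_val_inj.
  destruct (proj2_sig P) as [z [Zz eP]], (proj2_sig Q) as [w [Zw eQ]].
  apply (f_equal (@proj1_sig _ _)) in e.
  rewrite (pi0_to_H1_class P z), (pi0_to_H1_class Q w) in e by assumption.
  rewrite eP, eQ. apply pi0class_eq; [exact Zw|]. apply H1class_eq; [apply Zw | exact e].
Qed.
End Derivations.

Theorem lemma3p11 (C : CrossedModule) :
  (* Z_0 is a subgroup of Der *)
  ((forall d, in_Z0 C d -> is_der C d) /\
   in_Z0 C done /\
   (forall d d', in_Z0 C d -> in_Z0 C d' -> in_Z0 C (dmul C d d')) /\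
   (forall d, in_Z0 C d -> in_Z0 C (dinv C d)) /\
   (forall d, in_Z0 C d -> dmul C d (dinv C d) = done /\ dmul C (dinv C d) d = done)) /\
  (* first row: 0 -> H^0 -> G1 -> Der -> H^1 -> 1 exact *)
  ((forall a, in_H0 C a <-> delta C a = done) /\
   (forall c, is_der C (delta C c)) /\
   (forall c c', delta C (gmul c c') = dmul C (delta C c) (delta C c')) /\
   (forall d, is_der C d -> (H1class C d = H1class C done <-> exists c, d = delta C c)) /\
   (forall P : H1 C, exists d, is_der C d /\ proj1_sig P = H1class C d)) /\
  (* second row: 0 -> π1 -> G1 -> Z0 -> π0 -> 1 exact *)
  ((forall c, in_Z0 C (delta C c)) /\
   (forall z, in_Z0 C z -> (pi0class C z = pi0class C done <-> exists c, z = delta C c)) /\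
   (forall P : pi0 C, exists z, in_Z0 C z /\ proj1_sig P = pi0class C z)) /\
  (* vertical maps *)
  (exists phi : pi1 C -> H0set C,
     (exists phi' : H0set C -> pi1 C,
        (forall x, phi' (phi x) = x) /\ (forall y, phi (phi' y) = y)) /\
     (forall x, proj1_sig (phi x) = proj1_sig x)) /\
  (exists psi : pi0 C -> H1 C,
     (forall P Q, psi P = psi Q -> P = Q) /\
     (forall (P : pi0 C) z, in_Z0 C z -> proj1_sig P = pi0class C z ->
        proj1_sig (psi P) = H1class C z)).
Proof.
  split; [|split; [|split; [|split]]].
  -
    refine (conj (fun d Zd => proj1 Zd) (conj (done_Z0 C) (conj (dmul_Z0 C) _))).
    split; [apply dinv_Z0 | intros d _; apply dmulV].
  -
    split; [apply ker_delta|]. split; [intro c; exact (proj1 (delta_Z0 C c))|].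
    split; [apply delta_mul|]. split; [intros d _; apply H1class_trivial|].
    intros [P [d [Dd eP]]]. exists d. auto.
  -
    split; [apply delta_Z0|]. split; [intros z _; apply pi0class_trivial|].
    intros [P [z [Zz eP]]]. exists z. auto.
  -
    exists (pi1_to_H0 C). split; [|reflexivity].
    exists (H0_to_pi1 C). apply pi1_H0_inverse.
  -
    exists (pi0_to_H1 C). split; [apply pi0_to_H1_inj | apply pi0_to_H1_class].
Qed.
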